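(* Let $\mathbf{k}=\mathbb{F}_q$ with $\mathrm{char}\,\mathbf{k}\neq 2$ and let $(Q,\varrho)$ be an $\imath$quiver, i.e. a finite quiver $Q$ (not necessarily acyclic) with an involution $\varrho$. Then $\mathrm{mod}^{\mathrm{nil}}(\Lambda^\imath)$ is equivalent to $\mathcal{C}_\varrho(\mathrm{rep}^{\mathrm{nil}}_{\mathbf{k}}(Q))$.
   Context: $\mathrm{rep}^{\mathrm{nil}}_{\mathbf{k}}(Q)$ is the category of finite-dimensional nilpotent representations of $Q$ over $\mathbf{k}$ (all oriented cycles act nilpotently). An involution $\varrho$ of $Q$ is a quiver automorphism with $\varrho^2=\mathrm{Id}$; it induces an involution $\varrho$ of $\mathrm{rep}^{\mathrm{nil}}_{\mathbf{k}}(Q)$ given by $\varrho(M)_i=M_{\varrho(i)}$, $\varrho(M)_\alpha=M_{\varrho(\alpha)}$. The $\imath$quiver algebra is $\Lambda^\imath=\mathbf{k}\overline{Q}/\overline{I}$, where $\overline{Q}$ is obtained from $Q$ by adding, for each vertex $i$, an arrow $\varepsilon_i:i\to\varrho(i)$ (a loop if $\varrho(i)=i$), and $\overline{I}$ is generated by $\varepsilon_i\varepsilon_{\varrho(i)}$ for all vertices $i$ and by $\varepsilon_i\alpha-\varrho(\alpha)\varepsilon_j$ for every arrow $\alpha:j\to i$ of $Q$. $\mathrm{mod}^{\mathrm{nil}}(\Lambda^\imath)$ is the category of finite-dimensional nilpotent representations of $(\overline{Q},\overline{I})$. For a category $\mathcal{A}$ with involution $\varrho$, $\mathcal{C}_\varrho(\mathcal{A})$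 is the category of pairs $(M,d)$, $M\in\mathcal{A}$, $d:M\to\varrho(M)$ with $\varrho(d)\circ d=0$, with morphisms $f:M\to N$ satisfying $\varrho(f)d=ef$. *)

From HB Require Import structures.
From mathcomp Require Import all_boot all_order all_algebra.
Set Implicit Arguments. Unset Strict Implicit. Unset Printing Implicit Defensive.
Import GRing.Theory.
Local Open Scope ring_scope.

(* Composition is written diagrammatically: comp f g = "g after f".   *)
Record cat := Cat {
  ob : Type;
  hom : ob -> ob -> Type;
  idm : forall X, hom X X;
  comp : forall X Y Z, hom X Y -> hom Y Z -> hom X Z;
  heq : forall X Y, hom X Y -> hom X Y -> Prop
}.
Arguments idm {c} X.
Arguments comp {c X Y Z} f g.
Arguments heq {c X Y} f g.

Record functor (C D : cat) := Functor {
  fob : ob C -> ob D;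
  fmor : forall X Y, hom X Y -> hom (fob X) (fob Y);
  fmor_heq : forall X Y (f g : hom X Y), heq f g -> heq (fmor f) (fmor g);
  fmor_id : forall X, heq (fmor (idm X)) (idm (fob X));
  fmor_comp : forall X Y Z (f : hom X Y) (g : hom Y Z),
      heq (fmor (comp f g)) (comp (fmor f) (fmor g))
}.
Arguments fob {C D} _ _.
Arguments fmor {C D} _ {X Y} _.

Record natiso (C D : cat) (P P' : ob C -> ob D)
    (Pm : forall X Y, hom X Y -> hom (P X) (P Y))
    (P'm : forall X Y, hom X Y -> hom (P' X) (P' Y)) := NatIso {
  eta : forall X, hom (P X) (P' X);
  etainv : forall X, hom (P' X) (P X);
  eta_inv1 : forall X, heq (comp (eta X) (etainv X)) (idm (P X));
  eta_inv2 : forall X, heq (comp (etainv X) (eta X)) (idm (P' X));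
  eta_nat : forall X Y (f : hom X Y),
      heq (comp (Pm X Y f) (eta Y)) (comp (eta X) (P'm X Y f))
}.

Definition cat_equiv (C D : cat) : Prop :=
  exists (F : functor C D) (G : functor D C),
    inhabited (@natiso C C (fun X => fob G (fob F X)) (fun X => X)
                 (fun X Y f => fmor G (fmor F f)) (fun X Y f => f)) /\
    inhabited (@natiso D D (fun X => fob F (fob G X)) (fun X => X)
                 (fun X Y f => fmor F (fmor G f)) (fun X Y f => f)).

Record quiver := Quiver {
  qV : finType;
  qA : finType;
  qsrc : qA -> qV;
  qtgt : qA -> qV
}.

Record qinvol (Q : quiver) := QInvol {
  rv : qV Q -> qV Q;
  ra : qA Q -> qA Q;
  rvK : involutive rv;
  raK : involutive ra;
  ra_src : forall a, qsrc (ra a) = rv (qsrc a);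
  ra_tgt : forall a, qtgt (ra a) = rv (qtgt a)
}.
Arguments rv {Q} _ _.
Arguments ra {Q} _ _.

(* The quiver Qbar: add an arrow eps_i : i -> rho(i) for each vertex i *)
Definition qbar (Q : quiver) (r : qinvol Q) : quiver :=
  @Quiver (qV Q) (Finite.clone _ (qA Q + qV Q)%type)
    (fun x => match x with inl a => qsrc a | inr i => i end)
    (fun x => match x with inl a => qtgt a | inr i => rv r i end).

(* The space at vertex i is F^(rdim i) (row vectors); the arrow       *)
(* a : i -> j acts by right multiplication by rmat a.                 *)
Section Reps.
Variables (F : fieldType) (Q : quiver).

Record rep := Rep {
  rdim : qV Q -> nat;
  rmat : forall a : qA Q, 'M[F]_(rdim (qsrc a), rdim (qtgt a))
}.

(* identification of the spaces at i and j when i = j (zero otherwise) *)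
Definition trmx (d : qV Q -> nat) (i j : qV Q) : 'M[F]_(d i, d j) :=
  match i =P j with
  | ReflectT e => castmx (erefl (d i), f_equal d e) 1%:M
  | ReflectF _ => 0
  end.

Lemma trmx_nat (d d' : qV Q -> nat) (f : forall i, 'M[F]_(d i, d' i)) i j :
  trmx d i j *m f j = f i *m trmx d' i j.
Proof.
rewrite /trmx; case: eqP => [e|_]; last by rewrite mul0mx mulmx0.
by subst j; rewrite /= !castmx_id mul1mx mulmx1.
Qed.

(* the action of the sequence of arrows p = [a1; ...; an] (a1 applied
   first), as a map from the space at i to the space at j *)
Fixpoint pathmx (M : rep) (i j : qV Q) (p : seq (qA Q)) :
    'M[F]_(rdim M i, rdim M j) :=
  match p with
  | [::] => trmx (rdim M) i j
  | a :: p' => trmx (rdim M) i (qsrc a) *m rmat M a *m pathmx M (qtgt a) j p'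
  end.

Fixpoint is_path (i j : qV Q) (p : seq (qA Q)) : bool :=
  match p with
  | [::] => i == j
  | a :: p' => (qsrc a == i) && is_path (qtgt a) j p'
  end.

Definition rep_nil (M : rep) : Prop :=
  forall (i : qV Q) (p : seq (qA Q)), p != [::] -> is_path i i p ->
    exists n : nat, (pathmx M i i p) ^+ n = 0.

Record rep_hom (M N : rep) := RepHom {
  rmor : forall i, 'M[F]_(rdim M i, rdim N i);
  rmorP : forall a, rmat M a *m rmor (qtgt a) = rmor (qsrc a) *m rmat N a
}.

Definition rep_hom_id (M : rep) : rep_hom M M.
Proof.
exists (fun i => 1%:M) => a; by rewrite mulmx1 mul1mx.
Defined.

Definition rep_hom_comp (M N P : rep) (f : rep_hom M N) (g : rep_hom N P) :
  rep_hom M P.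
Proof.
exists (fun i => rmor f i *m rmor g i) => a.
by rewrite mulmxA rmorP -mulmxA rmorP mulmxA.
Defined.

Definition rep_heq (M N : rep) (f g : rep_hom M N) : Prop :=
  forall i, rmor f i = rmor g i.

End Reps.
Arguments rmat {F Q} _ _.
Arguments rdim {F Q} _ _.
Arguments rmor {F Q M N} _ _.
Arguments trmx {F Q} d i j.
Arguments pathmx {F Q} M i j p.
Arguments is_path {Q} i j p.
Arguments rep_nil {F Q} M.
Arguments rep_hom_id {F Q} M.
Arguments rep_hom_comp {F Q M N P} f g.
Arguments rep_heq {F Q M N} f g.

Definition repnil_ob (F : fieldType) (Q : quiver) :=
  {M : rep F Q | rep_nil M}.

Definition repnil_cat (F : fieldType) (Q : quiver) : cat :=
  @Cat (repnil_ob F Q)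
    (fun X Y => rep_hom (sval X) (sval Y))
    (fun X => rep_hom_id (sval X))
    (fun X Y Z f g => rep_hom_comp f g)
    (fun X Y f g => rep_heq f g).

(* The involution rho on representations: rho(M)_i = M_{rho i},       *)
(* rho(M)_a = M_{rho a};  rho(f)_i = f_{rho i}.                        *)
Section Rho.
Variables (F : fieldType) (Q : quiver) (r : qinvol Q).

Definition rho_rep (M : rep F Q) : rep F Q :=
  @Rep F Q (fun i => rdim M (rv r i))
    (fun a => trmx (fun i => rdim M i) (rv r (qsrc a)) (qsrc (ra r a))
              *m rmat M (ra r a)
              *m trmx (fun i => rdim M i) (qtgt (ra r a)) (rv r (qtgt a))).

Definition rho_hom (M N : rep F Q) (f : rep_hom M N) :
  rep_hom (rho_rep M) (rho_rep N).
Proof.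
exists (fun i => rmor f (rv r i)) => a /=.
rewrite -!mulmxA (trmx_nat (fun i => rmor f i)) !mulmxA; congr (_ *m _).
by rewrite -!mulmxA rmorP !mulmxA (trmx_nat (fun i => rmor f i)).
Defined.

(* objects of C_rho(rep^nil(Q)): pairs (M, d), d : M -> rho(M),
   rho(d) o d = 0 *)
Record Cobj := CObj {
  cM : rep F Q;
  cM_nil : rep_nil cM;
  cd : rep_hom cM (rho_rep cM);
  cd_sq : forall i, rmor cd i *m rmor (rho_hom cd) i = 0
}.

Record Chom (X Y : Cobj) := CHom {
  cf : rep_hom (cM X) (cM Y);
  cfP : forall i, rmor (cd X) i *m rmor (rho_hom cf) i
                  = rmor cf i *m rmor (cd Y) i
}.

Definition Chom_id (X : Cobj) : Chom X X.
Proof.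
exists (rep_hom_id (cM X)) => i /=; by rewrite mulmx1 mul1mx.
Defined.

Definition Chom_comp (X Y Z : Cobj) (f : Chom X Y) (g : Chom Y Z) : Chom X Z.
Proof.
exists (rep_hom_comp (cf f) (cf g)) => i /=.
have := cfP f i; have := cfP g i; rewrite /= => Hg Hf.
by rewrite mulmxA Hf -mulmxA Hg mulmxA.
Defined.

Definition Crho_cat : cat :=
  @Cat Cobj Chom Chom_id (fun X Y Z f g => Chom_comp f g)
    (fun X Y f g => rep_heq (cf f) (cf g)).

(* mod^nil(Lambda^i): nilpotent representations of Qbar satisfying    *)
(* the relations of Ibar:                                             *)
(*   eps_i eps_{rho i} = 0  (path [eps_{rho i}; eps_i] from rho i)     *)
(*   eps_i alpha = rho(alpha) eps_j  for alpha : j -> i                *)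
Definition ibar_rel (N : rep F (qbar r)) : Prop :=
  (forall i : qV Q,
     @pathmx F (qbar r) N (rv r i) (rv r i) [:: inr (rv r i); inr i] = 0) /\
  (forall a : qA Q,
     @pathmx F (qbar r) N (qsrc a) (rv r (qtgt a)) [:: inl a; inr (qtgt a)] =
     @pathmx F (qbar r) N (qsrc a) (rv r (qtgt a)) [:: inr (qsrc a); inl (ra r a)]).

Definition modnil_ob := {N : rep F (qbar r) | rep_nil N /\ ibar_rel N}.

Definition modnil_cat : cat :=
  @Cat modnil_ob
    (fun X Y => rep_hom (sval X) (sval Y))
    (fun X => rep_hom_id (sval X))
    (fun X Y Z f g => rep_hom_comp f g)
    (fun X Y f g => rep_heq f g).

End Rho.

(* A nilpotent representation of (Qbar, Ibar) is a representation M of Q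
   together with maps eps_i : M_i -> M_(rho i).  The relations
   eps_i alpha = rho(alpha) eps_j say precisely that eps is a morphism
   M -> rho(M), and eps_i eps_(rho i) = 0 says that rho(eps) eps = 0.  Hence
   restricting to Q and adding the arrows eps are mutually inverse on the nose.
   The one point needing an argument is nilpotency: a cycle of Qbar through
   some eps acts with square zero, because the image of eps lies in ker eps
   (as rho(eps) eps = 0), ker eps is stable under all arrows (as eps commutes with
   the arrows of Q up to rho), and a path through eps kills ker eps. *)
From Pilot Require Import Defs.
From HB Require Import structures.
From mathcomp Require Import all_boot all_order all_algebra all_field.
Set Implicit Arguments. Unset Strict Implicit. Unset Printing Implicit Defensive.
Import GRing.Theory.
Local Open Scope ring_scope.

Section Transport.
Variables (F : fieldType) (Q : quiver) (d : qV Q -> nat).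

Lemma trmx_refl i : @Defs.trmx F Q d i i = 1%:M.
Proof.
rewrite /Defs.trmx; case: (i =P i) => // e.
by rewrite (eq_irrelevance e (erefl i)) castmx_id.
Qed.

Lemma trmx_trans i j k : i = j ->
  @Defs.trmx F Q d i j *m @Defs.trmx F Q d j k = @Defs.trmx F Q d i k.
Proof. by move=> <-; rewrite trmx_refl mul1mx. Qed.

End Transport.

Lemma trmx_inj (F : fieldType) (Q Q' : quiver) (f : qV Q -> qV Q')
    (d : qV Q' -> nat) (f_inj : injective f) i j :
  @Defs.trmx F Q (fun k => d (f k)) i j = @Defs.trmx F Q' d (f i) (f j).
Proof.
rewrite /Defs.trmx.
case: (i =P j) => [e|ne]; case: (f i =P f j) => [e'|ne'].
- by subst j; rewrite (eq_irrelevance e' (erefl _)).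
- by subst j; case: ne'.
- by case: ne; apply: f_inj.
- by [].
Qed.

Section IQuiver.
Variables (F : fieldType) (Q : quiver) (r : qinvol Q).
Local Notation Qbar := (qbar r).

Definition linl (p : seq (qA Q)) : seq (qA Qbar) := map inl p.

Definition has_eps (p : seq (qA Qbar)) : bool :=
  has (fun x : qA Qbar => if x is inr _ then true else false) p.

Lemma is_path_linl i j p : @is_path Qbar i j (linl p) = @is_path Q i j p.
Proof. by elim: p i => [|a p IHp] i //=; rewrite IHp. Qed.

Lemma has_epsN_linl p : ~~ has_eps p -> exists q, p = linl q.
Proof.
elim: p => [|[a|i] p IHp] //=; first by exists [::].
by case/IHp=> q ->; exists (a :: q).
Qed.

Section Restriction.
Variable N : rep F Qbar.

Definition restrict_rep : rep F Q := @Rep F Q (rdim N) (fun a => rmat N (inl a)).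

Lemma pathmx_restrict i j p : pathmx restrict_rep i j p = pathmx N i j (linl p).
Proof. by elim: p i => [|a p IHp] i //=; rewrite IHp. Qed.

Lemma restrict_nil : rep_nil N -> rep_nil restrict_rep.
Proof.
move=> N_nil i p p_n0 p_cyc; rewrite pathmx_restrict; apply: N_nil.
  by case: p p_n0 {p_cyc}.
by rewrite is_path_linl.
Qed.

Hypothesis N_rel : ibar_rel N.

Definition eps_hom : rep_hom restrict_rep (rho_rep r restrict_rep).
Proof.
exists (fun i => rmat N (inr i)) => a /=.
case: N_rel => _ /(_ a) /=; rewrite !trmx_refl !mulmx1 !mul1mx => ->.
by rewrite !mulmxA.
Defined.

Lemma eps_hom_sq i : rmor eps_hom i *m rmor (rho_hom r eps_hom) i = 0.
Proof.
have [eps_sq _] := N_rel.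
(* The relation at [rv r i] starts at [rv r (rv r i)]; transport it back to [i]. *)
have /= := eps_sq (rv r i); rewrite !trmx_refl !mul1mx !mulmx1 => eps_sq_i.
set t := @Defs.trmx F Qbar (rdim N) i (rv r (rv r i)).
have := congr1 (mulmx t) eps_sq_i; rewrite mulmx0 /t !mulmxA.
rewrite (@trmx_nat F Qbar _ (fun j => rdim N (rv r j)) (fun j => rmat N (inr j))).
rewrite (@trmx_inj F Qbar Q (rv r) _ (inv_inj (rvK r))) -!mulmxA (mulmxA (Defs.trmx _ _ _)).
by rewrite trmx_trans ?rvK // trmx_refl mul1mx.
Qed.

End Restriction.

Definition restrict_ob (X : modnil_ob F r) : Cobj F r :=
  @CObj F Q r (restrict_rep (sval X)) (restrict_nil (proj1 (svalP X)))
    (eps_hom (proj2 (svalP X))) (eps_hom_sq (proj2 (svalP X))).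

Definition restrict_map (N N' : rep F Qbar) (f : rep_hom N N') :
  rep_hom (restrict_rep N) (restrict_rep N') :=
  @RepHom F Q (restrict_rep N) (restrict_rep N') (rmor f) (fun a => rmorP f (inl a)).

Definition restrict_hom (X Y : modnil_ob F r) (f : rep_hom (sval X) (sval Y)) :
  Chom (restrict_ob X) (restrict_ob Y).
Proof. by exists (restrict_map f) => i; exact: (rmorP f (inr i)). Defined.

Definition restrict_functor : functor (modnil_cat F r) (Crho_cat F r).
Proof. by exists restrict_ob restrict_hom. Defined.

Section Extension.
Variables (M : rep F Q) (d : rep_hom M (rho_rep r M)).
Hypothesis d_sq : forall i, rmor d i *m rmor (rho_hom r d) i = 0.

Definition extend_rep : rep F Qbar :=
  @Rep F Qbar (rdim M) (fun x => match x with inl a => rmat M a | inr i => rmor d i end).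
Local Notation N := extend_rep.

Lemma pathmx_extend i j p : pathmx N i j (linl p) = pathmx M i j p.
Proof. by elim: p i => [|a p IHp] i //=; rewrite IHp. Qed.

Section KernelOfEps.
Variables (m : nat) (i : qV Q) (V : 'M[F]_(m, rdim M i)).
Hypothesis V_ker : V *m rmor d i = 0.

Lemma ker_eps_trmx k : V *m @Defs.trmx F Qbar (rdim M) i k *m rmor d k = 0.
Proof.
rewrite -mulmxA (@trmx_nat F Qbar _ (fun j => rdim M (rv r j)) (rmor d)).
by rewrite mulmxA V_ker mul0mx.
Qed.

Lemma ker_eps_arrow (x : qA Qbar) :
  V *m @Defs.trmx F Qbar (rdim M) i (@qsrc Qbar x) *m rmat N x
    *m rmor d (@qtgt Qbar x) = 0.
Proof.
have := ker_eps_trmx (@qsrc Qbar x); case: x => [a|k] /= Vt_ker.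
  by rewrite -mulmxA (rmorP d a) mulmxA Vt_ker mul0mx.
by rewrite -mulmxA d_sq mulmx0.
Qed.

End KernelOfEps.

Lemma ker_eps_pathmx m i j p (V : 'M[F]_(m, rdim M i)) :
  V *m rmor d i = 0 -> V *m pathmx N i j p *m rmor d j = 0.
Proof.
elim: p i V => [|x p IHp] i V V_ker /=; first exact: ker_eps_trmx.
by rewrite !mulmxA; apply/IHp/ker_eps_arrow.
Qed.

Lemma ker_eps_pathmx_eps m i j p (V : 'M[F]_(m, rdim M i)) :
  has_eps p -> V *m rmor d i = 0 -> V *m pathmx N i j p = 0.
Proof.
elim: p i V => [|[a|k] p IHp] i V //= p_eps V_ker; rewrite !mulmxA.
  exact/IHp/(ker_eps_arrow _ (inl a)).
by rewrite (ker_eps_trmx V_ker) mul0mx.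
Qed.

Lemma pathmx_eps_ker i j p : has_eps p -> pathmx N i j p *m rmor d j = 0.
Proof.
elim: p i => [|[a|k] p IHp] i //= p_eps.
  by rewrite -mulmxA IHp // mulmx0.
by apply: ker_eps_pathmx; rewrite -mulmxA d_sq mulmx0.
Qed.

Lemma extend_nil : rep_nil M -> rep_nil N.
Proof.
move=> M_nil i p p_n0 p_cyc; have [p_eps|/has_epsN_linl [q p_q]] := boolP (has_eps p).
  exists 2%N; rewrite expr2 -mulmxE.
  exact/ker_eps_pathmx_eps/pathmx_eps_ker.
rewrite p_q pathmx_extend; apply: M_nil; first by case: q p_q p_n0 {p_cyc} => [->|].
by rewrite -is_path_linl -p_q.
Qed.

Lemma extend_ibar : ibar_rel N.
Proof.
split=> [i|a] /=; rewrite !trmx_refl !mul1mx !mulmx1.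
  rewrite (@trmx_nat F Qbar _ (fun j => rdim M (rv r j)) (rmor d)).
  by rewrite mulmxA d_sq mul0mx.
by rewrite (rmorP d a) /= !mulmxA.
Qed.

End Extension.

Definition extend_ob (X : Cobj F r) : modnil_ob F r :=
  exist _ (extend_rep (cd X))
    (conj (extend_nil (cd_sq X) (cM_nil X)) (extend_ibar (cd_sq X))).

Definition extend_hom (X Y : Cobj F r) (f : Chom X Y) :
  rep_hom (extend_rep (cd X)) (extend_rep (cd Y)).
Proof.
refine (@RepHom F Qbar (extend_rep (cd X)) (extend_rep (cd Y)) (rmor (cf f)) _).
by case=> [a|i] /=; [exact: (rmorP (cf f) a) | exact: (cfP f i)].
Defined.

Definition extend_functor : functor (Crho_cat F r) (modnil_cat F r).
Proof. by exists extend_ob extend_hom. Defined.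

Definition extend_restrict_hom (X : modnil_ob F r) :
  rep_hom (sval (extend_ob (restrict_ob X))) (sval X).
Proof.
refine (@RepHom F Qbar (sval (extend_ob (restrict_ob X))) (sval X) (fun i => 1%:M) _).
by case=> [a|i] /=; rewrite mulmx1 mul1mx.
Defined.

Definition extend_restrict_inv (X : modnil_ob F r) :
  rep_hom (sval X) (sval (extend_ob (restrict_ob X))).
Proof.
refine (@RepHom F Qbar (sval X) (sval (extend_ob (restrict_ob X))) (fun i => 1%:M) _).
by case=> [a|i] /=; rewrite mulmx1 mul1mx.
Defined.

Definition restrict_extend_hom (X : Cobj F r) : Chom (restrict_ob (extend_ob X)) X.
Proof.
unshelve refine (@CHom F Q r _ _
  (@RepHom F Q (cM (restrict_ob (extend_ob X))) (cM X) (fun i => 1%:M) _) _).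
all: by move=> ? /=; rewrite mulmx1 mul1mx.
Defined.

Definition restrict_extend_inv (X : Cobj F r) : Chom X (restrict_ob (extend_ob X)).
Proof.
unshelve refine (@CHom F Q r _ _
  (@RepHom F Q (cM X) (cM (restrict_ob (extend_ob X))) (fun i => 1%:M) _) _).
all: by move=> ? /=; rewrite mulmx1 mul1mx.
Defined.

Lemma modnil_equiv_Crho : cat_equiv (modnil_cat F r) (Crho_cat F r).
Proof.
exists restrict_functor, extend_functor; split; constructor.
- exists extend_restrict_hom extend_restrict_inv => [X i|X i|X Y f i] /=;
    by rewrite ?mulmx1 ?mul1mx.
- exists restrict_extend_hom restrict_extend_inv => [X i|X i|X Y f i] /=;
    by rewrite ?mulmx1 ?mul1mx.
Qed.

End IQuiver.

Theorem lemma2p4 (F : finFieldType) (hF : (2%N \notin [pchar F])%R)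
  (Q : quiver) (r : qinvol Q) :
  cat_equiv (modnil_cat F r) (Crho_cat F r).
Proof. exact: modnil_equiv_Crho. Qed.
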